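(* For all formulas $\phi,\psi$ of $\mathsf{JRC}$: if $\models_{\mathsf{JRC}}\phi\rightsquigarrow\psi$, then $\phi$ and $\psi$ have at least one atomic proposition in common.
   Context: Language of $\mathsf{JRC}$: countable sets $\mathsf{Var}$ (justification variables) and $\mathsf{Prop}$ (atoms). Terms $t ::= x \mid t+t$ ($x\in\mathsf{Var}$); formulas $\phi ::= p \mid {\sim}\phi \mid \phi\wedge\phi \mid \phi\to\phi \mid \phi\rightsquigarrow\phi \mid t{:}\phi$. A Routley relational model is $\mathcal M=(W,W_N,R,R_{Fm},R_{Tm},{*},\mathcal V)$ where $W$ is nonempty, $W_N\subseteq W$ nonempty (normal states); $R\subseteq W\times W\times W$ satisfies: for $w\in W_N$, $Rwvu$ iff $v=u$; $R_{Fm}$ assigns to each formula $\phi$ a relation $R_\phi\subseteq W\times W$; $R_{Tm}$ assigns to each term $t$ a relation $R_t\subseteq W\times W$; ${*}:W\to W$ with $w^{**}=w$; $\mathcal V:\mathsf{Prop}\to\mathcal P(W)$. $R_\phi(w)$, $R_t(w)$ are successor sets. Truth at every $w\in W$: $p$ iff $w\in\mathcal V(p)$; ${\sim}\phi$ iff $w^*\not\models\phi$; $\phi\wedge\psi$ iff both; $\phi\to\psi$ iff for all $v,u$ with $Rwvu$, $v\models\phi$ implies $u\models\psi$; $\phi\rightsquigarrow\psi$ iff $R_\phi(w)\subseteq[\psi]$; $t{:}\phi$ iff $R_t(w)\subseteq[\phi]$; here $[\phi]=\{w\in W:w\models\phi\}$. A $\mathsf{JRC}$-model is a Routley relational model with: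 (1) $R_\phi(w)\subseteq[\phi]$ for all $w\in W_N$ and all $\phi$; (2) for all $w\in W$, if $w\in[\phi]$ then $w\in R_\phi(w)$; (3) $R_{s+t}\subseteq R_s\cap R_t$ for all $s,t$. $\models_{\mathsf{JRC}}\phi$ iff $\phi$ is true at every normal state of every $\mathsf{JRC}$-model. *)

From Stdlib Require Import List.

Definition var := nat.
Definition atom := nat.

Inductive term : Type :=
| TVar : var -> term
| TPlus : term -> term -> term.

Inductive form : Type :=
| FAtom : atom -> form
| FNeg : form -> form
| FAnd : form -> form -> form
| FImp : form -> form -> form
| FRel : form -> form -> form    (* phi ~> psi (relevant/reason implication) *)
| FJust : term -> form -> form.

Fixpoint atoms (f : form) : list atom :=
  match f with
  | FAtom p => p :: nil
  | FNeg a => atoms a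
  | FAnd a b => atoms a ++ atoms b
  | FImp a b => atoms a ++ atoms b
  | FRel a b => atoms a ++ atoms b
  | FJust _ a => atoms a
  end.

Record model : Type := {
  W : Type;
  WN : W -> Prop;
  WN_nonempty : exists w, WN w;
  R : W -> W -> W -> Prop;
  R_normal : forall w v u, WN w -> (R w v u <-> v = u);
  RFm : form -> W -> W -> Prop;
  RTm : term -> W -> W -> Prop;
  star : W -> W;
  star_invol : forall w, star (star w) = w;
  V : atom -> W -> Prop
}.

Fixpoint sat (M : model) (w : W M) (f : form) : Prop :=
  match f with
  | FAtom p => V M p w
  | FNeg a => ~ sat M (star M w) a
  | FAnd a b => sat M w a /\ sat M w b
  | FImp a b => forall v u, R M w v u -> sat M v a -> sat M u b
  | FRel a b => forall v, RFm M a w v -> sat M v b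
  | FJust t a => forall v, RTm M t w v -> sat M v a
  end.

Definition JRC_model (M : model) : Prop :=
  (forall w phi v, WN M w -> RFm M phi w v -> sat M v phi) /\
  (forall w phi, sat M w phi -> RFm M phi w w) /\
  (forall s t w v, RTm M (TPlus s t) w v -> RTm M s w v /\ RTm M t w v).

Definition JRC_valid (phi : form) : Prop :=
  forall M : model, JRC_model M -> forall w : W M, WN M w -> sat M w phi.

From Stdlib Require Import List Classical.

(* If [phi] and [psi] share no atom, build a model with a normal state [sN]
   and two states [sA], [sB] swapped by [*], where [sA] makes exactly the
   atoms of [phi] true and [sB] exactly the others.  On such a mirror pair
   every formula whose atoms are all true at one state and false at the other
   is itself true at the first and false at the second; hence [phi] holds at
   [sA] and [psi] fails there.  Putting [sA] into [R_phi(sN)] respects the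
   JRC conditions and refutes [phi ~> psi] at [sN]. *)

Definition mirror_state (M : model) (w : W M) : Prop :=
  (forall v u, R M w v u <-> v = star M w /\ u = w) /\
  (forall chi v, RFm M chi w v <-> v = w) /\
  (forall t v, RTm M t w v <-> v = w).

Lemma sat_mirror_pair (M : model) (a b : W M) (chi : form) :
  mirror_state M a -> mirror_state M b -> star M a = b ->
  Forall (fun p => V M p a /\ ~ V M p b) (atoms chi) ->
  sat M a chi /\ ~ sat M b chi.
Proof.
  intros [Ra [Fa Ta]] [Rb [Fb Tb]] Hab.
  assert (Hba : star M b = a) by (rewrite <- Hab; apply star_invol).
  induction chi as [p | chi IH | chi1 IH1 chi2 IH2 | chi1 IH1 chi2 IH2
                   | chi1 IH1 chi2 IH2 | t chi IH];
    simpl; intros Hat; try rewrite Forall_app in Hat.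
  - exact (Forall_inv Hat).
  - rewrite Hab, Hba; destruct (IH Hat); tauto.
  - destruct Hat as [H1 H2]; destruct (IH1 H1), (IH2 H2); tauto.
  - destruct Hat as [H1 H2]; destruct (IH1 H1) as [Ha1 _], (IH2 H2) as [Ha2 Hb2].
    split.
    + intros v u Hr _; apply Ra in Hr as [_ ->]; exact Ha2.
    + intros Himp; apply Hb2, (Himp a b); [apply Rb; auto | exact Ha1].
  - destruct Hat as [_ H2]; destruct (IH2 H2) as [Ha2 Hb2]; split.
    + intros v Hv; apply Fa in Hv as ->; exact Ha2.
    + intros Hrel; apply Hb2, Hrel, Fb; reflexivity.
  - destruct (IH Hat) as [Ha Hb]; split.
    + intros v Hv; apply Ta in Hv as ->; exact Ha.
    + intros Hj; apply Hb, Hj, Tb; reflexivity.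
Qed.

Inductive state : Type := sN | sA | sB.

Definition flip (w : state) : state :=
  match w with sN => sN | sA => sB | sB => sA end.

Lemma flip_invol (w : state) : flip (flip w) = w.
Proof. destruct w; reflexivity. Qed.

Definition acc (w v u : state) : Prop :=
  match w with sN => v = u | _ => v = flip w /\ u = w end.

Lemma acc_normal (w v u : state) : w = sN -> (acc w v u <-> v = u).
Proof. intros ->; reflexivity. Qed.

Lemma sN_normal : exists w : state, w = sN.
Proof. exists sN; reflexivity. Qed.

Section CounterModel.

Variable phi : form.

Definition val (p : atom) (w : state) : Prop :=
  match w with
  | sN => False
  | sA => In p (atoms phi)
  | sB => ~ In p (atoms phi)
  end.

(* [ext] is the extension of [chi]: condition (2) forces [sN] into
   [R_chi(sN)] exactly when [chi] holds at [sN], so truth and the reason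
   relations are defined together by recursion on formulas. *)
Definition reason_acc (chi : form) (ext : state -> Prop) (w v : state) : Prop :=
  match w with
  | sN => (v = sN /\ ext sN) \/ (chi = phi /\ v = sA)
  | _ => v = w
  end.

Fixpoint holds (chi : form) (w : state) : Prop :=
  match chi with
  | FAtom p => val p w
  | FNeg a => ~ holds a (flip w)
  | FAnd a b => holds a w /\ holds b w
  | FImp a b => forall v u, acc w v u -> holds a v -> holds b u
  | FRel a b => forall v, reason_acc a (holds a) w v -> holds b v
  | FJust _ a => holds a w
  end.

Definition counter_model : model :=
  {| W := state; WN := fun w => w = sN; WN_nonempty := sN_normal;
     R := acc; R_normal := acc_normal;
     RFm := fun chi => reason_acc chi (holds chi);
     RTm := fun _ w v => v = w;
     star := flip; star_invol := flip_invol; V := val |}.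

Lemma sat_counter_model (chi : form) (w : state) :
  sat counter_model w chi <-> holds chi w.
Proof.
  revert w; induction chi as [p | a IH | a IHa b IHb | a IHa b IHb
                             | a IHa b IHb | t a IH]; intros w; simpl.
  - reflexivity.
  - rewrite IH; reflexivity.
  - rewrite IHa, IHb; reflexivity.
  - split; intros H v u Hr Ha; apply IHb, (H v u Hr), IHa; exact Ha.
  - split; intros H v Hr; apply IHb, H; exact Hr.
  - split; [intros H; apply IH, H; reflexivity | intros H v ->; apply IH, H].
Qed.

Lemma mirror_state_counter_model (w : state) :
  w <> sN -> mirror_state counter_model w.
Proof.
  destruct w; intros Hw; [congruence | |];
    unfold mirror_state; simpl; repeat split; tauto.
Qed.

Lemma mirror_pair_counter_model (chi : form) (a b : state) :
  a <> sN -> b <> sN -> flip a = b ->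
  Forall (fun p => val p a /\ ~ val p b) (atoms chi) ->
  holds chi a /\ ~ holds chi b.
Proof.
  intros Ha Hb Hab Hat.
  rewrite <- !sat_counter_model.
  apply sat_mirror_pair.
  - apply mirror_state_counter_model; exact Ha.
  - apply mirror_state_counter_model; exact Hb.
  - exact Hab.
  - exact Hat.
Qed.

Lemma counter_model_JRC : JRC_model counter_model.
Proof.
  split; [| split].
  - intros w chi v -> [[-> Hext] | [-> ->]]; apply sat_counter_model.
    + exact Hext.
    + apply (mirror_pair_counter_model phi sA sB); try discriminate; [reflexivity |].
      apply Forall_forall; intros p Hp; simpl; tauto.
  - intros [] chi Hs; simpl; auto.
    left; split; [reflexivity | apply sat_counter_model; exact Hs].
  - intros s t w v Hv; split; exact Hv.
Qed.

Lemma counter_model_refutes (psi : form) :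
  (forall p, In p (atoms psi) -> ~ In p (atoms phi)) ->
  ~ sat counter_model sN (FRel phi psi).
Proof.
  intros Hdisj Hrel.
  assert (Hpsi : holds psi sB /\ ~ holds psi sA).
  { apply mirror_pair_counter_model; try discriminate; [reflexivity |].
    apply Forall_forall; intros p Hp; simpl; auto. }
  apply (proj2 Hpsi), sat_counter_model, Hrel; simpl; auto.
Qed.

End CounterModel.

Theorem mainTheorem16 : forall phi psi : form,
  JRC_valid (FRel phi psi) ->
  exists p : atom, In p (atoms phi) /\ In p (atoms psi).
Proof.
  intros phi psi Hvalid.
  apply NNPP; intros Hno_common.
  apply (counter_model_refutes phi psi).
  - intros p Hpsi Hphi; apply Hno_common; exists p; auto.
  - apply Hvalid; [apply counter_model_JRC | reflexivity].
Qed.
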